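(* Let $E$ be a directed graph. The graph inverse semigroup $\mathcal S(E)$ admits a nontrivial strong grading (by some group) if and only if $E$ is nonempty and has no source vertices.
   Context: A directed graph $E=(E^0,E^1,\mathbf r,\mathbf s)$ has vertices $E^0$, edges $E^1$, source and range maps $\mathbf s,\mathbf r:E^1\to E^0$. A vertex $v$ is a source if $\mathbf r^{-1}(v)=\emptyset$. $\mathcal S(E)$ is the semigroup with zero generated by $E^0\cup E^1\cup\{e^{-1}:e\in E^1\}$ subject to: $vw=\delta_{v,w}v$ for $v,w\in E^0$; $\mathbf s(e)e=e\mathbf r(e)=e$; $\mathbf r(e)e^{-1}=e^{-1}\mathbf s(e)=e^{-1}$; $e^{-1}f=\delta_{e,f}\mathbf r(e)$ for $e,f\in E^1$. A $\Gamma$-grading of a semigroup $S$ with zero is a map $\deg:S\setminus\{0\}\to\Gamma$ with $\deg(st)=\deg(s)\deg(t)$ whenever $st\neq0$; $S_\alpha=\deg^{-1}(\alpha)\cup\{0\}$. It is trivial if $S_\alpha=\{0\}$ for all $\alpha\neq\varepsilon$ (the identity of $\Gamma$), and strong if $S_\alpha S_\beta=S_{\alpha\beta}$ for all $\alpha,\beta\in\Gamma$. *)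

Record Group := {
  gcar :> Type;
  gmul : gcar -> gcar -> gcar;
  gone : gcar;
  ginv : gcar -> gcar;
  gmulA : forall x y z, gmul x (gmul y z) = gmul (gmul x y) z;
  gmul1l : forall x, gmul gone x = x;
  gmul1r : forall x, gmul x gone = x;
  gmulVl : forall x, gmul (ginv x) x = gone;
  gmulVr : forall x, gmul x (ginv x) = gone
}.

Record Graph := {
  vert : Type;
  edge : Type;
  rg : edge -> vert;
  sc : edge -> vert
}.

Definition is_source (E : Graph) (v : vert E) : Prop :=
  forall e : edge E, rg E e <> v.

(** Generators: vertices, edges, and ghost edges e^{-1}. *)
Inductive letter (E : Graph) : Type :=
  | LV : vert E -> letter E
  | LE : edge E -> letter E
  | LI : edge E -> letter E.
Arguments LV {E}. Arguments LE {E}. Arguments LI {E}.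

Inductive term (E : Graph) : Type :=
  | TZ : term E
  | TG : letter E -> term E
  | TM : term E -> term E -> term E.
Arguments TZ {E}. Arguments TG {E}. Arguments TM {E}.

(** The congruence generated by the semigroup-with-zero axioms and the
    defining relations of S(E).  S(E) is the quotient [term E / cong E]. *)
Inductive cong (E : Graph) : term E -> term E -> Prop :=
  | c_refl t : cong E t t
  | c_sym t u : cong E t u -> cong E u t
  | c_trans t u w : cong E t u -> cong E u w -> cong E t w
  | c_mul t t' u u' : cong E t t' -> cong E u u' -> cong E (TM t u) (TM t' u')
  | c_assoc t u w : cong E (TM t (TM u w)) (TM (TM t u) w)
  | c_zl t : cong E (TM TZ t) TZ
  | c_zr t : cong E (TM t TZ) TZ
  | c_vv v : cong E (TM (TG (LV v)) (TG (LV v))) (TG (LV v))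
  | c_vw v w : v <> w -> cong E (TM (TG (LV v)) (TG (LV w))) TZ
  | c_se e : cong E (TM (TG (LV (sc E e))) (TG (LE e))) (TG (LE e))
  | c_er e : cong E (TM (TG (LE e)) (TG (LV (rg E e)))) (TG (LE e))
  | c_ri e : cong E (TM (TG (LV (rg E e))) (TG (LI e))) (TG (LI e))
  | c_is e : cong E (TM (TG (LI e)) (TG (LV (sc E e)))) (TG (LI e))
  | c_ie e : cong E (TM (TG (LI e)) (TG (LE e))) (TG (LV (rg E e)))
  | c_if e f : e <> f -> cong E (TM (TG (LI e)) (TG (LE f))) TZ.

Definition is_zero (E : Graph) (t : term E) : Prop := cong E t TZ.

(** A Γ-grading of S(E): deg : S(E)\{0} -> Γ (given on representatives,
    well defined on nonzero classes) with deg(st) = deg s deg t when st <> 0. *)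
Definition is_grading (E : Graph) (G : Group) (deg : term E -> G) : Prop :=
  (forall t u, ~ is_zero E t -> cong E t u -> deg t = deg u) /\
  (forall t u, ~ is_zero E (TM t u) -> deg (TM t u) = gmul G (deg t) (deg u)).

Definition in_comp (E : Graph) (G : Group) (deg : term E -> G) (a : G)
  (t : term E) : Prop := is_zero E t \/ deg t = a.

Definition trivial_grading (E : Graph) (G : Group) (deg : term E -> G) : Prop :=
  forall a : G, a <> gone G -> forall t, in_comp E G deg a t -> is_zero E t.

Definition strong_grading (E : Graph) (G : Group) (deg : term E -> G) : Prop :=
  forall a b : G,
    (forall s t, in_comp E G deg a s -> in_comp E G deg b t ->
       in_comp E G deg (gmul G a b) (TM s t)) /\
    (forall u, in_comp E G deg (gmul G a b) u ->
       exists s t, in_comp E G deg a s /\ in_comp E G deg b t /\ cong E (TM s t) u).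

From Stdlib Require Import Classical List Bool.
Import ListNotations.

(* If v is a source, no edge can be prepended to a path starting at v, so any
   t acting on the trivial path v fixes it; then t v = v and deg t = 1.  A
   strong grading writes v = s t with t in S_a for every a, so every a is
   trivial.  Without vertices S(E) = {0}.  Conversely, when no vertex is a
   source, the parity of the number of real and ghost edges is a Z/2-grading,
   nontrivial on any edge, and strong because a nonzero u equals u r(e) for
   some edge e, hence also (u e^-1) e. *)

Section GraphInverseSemigroup.
Variable E : Graph.

Lemma is_zero_cong t u : cong E t u -> is_zero E u -> is_zero E t.
Proof. exact (c_trans E t u TZ). Qed.

Lemma is_zero_mull t u : is_zero E t -> is_zero E (TM t u).
Proof. intros Ht. exact (c_trans E _ _ _ (c_mul E _ _ _ _ Ht (c_refl E u)) (c_zl E u)). Qed.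

Lemma is_zero_mulr t u : is_zero E u -> is_zero E (TM t u).
Proof. intros Hu. exact (c_trans E _ _ _ (c_mul E _ _ _ _ (c_refl E t) Hu) (c_zr E t)). Qed.

Lemma cong_reassoc t u w x : cong E (TM t (TM u w)) x -> cong E (TM (TM t u) w) x.
Proof. exact (c_trans E _ _ _ (c_sym E _ _ (c_assoc E t u w))). Qed.

Lemma zero_of_no_vertex : ~ inhabited (vert E) -> forall t, is_zero E t.
Proof.
  intros Hno t. induction t as [| [w|e|e] | t1 IH1 t2 _].
  - apply c_refl.
  - destruct Hno; constructor; exact w.
  - destruct Hno; constructor; exact (sc E e).
  - destruct Hno; constructor; exact (sc E e).
  - apply is_zero_mull, IH1.
Qed.

Lemma right_vertex_unit u :
  is_zero E u \/ exists v, cong E (TM u (TG (LV v))) u.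
Proof.
  induction u as [| [w|e|e] | t1 _ t2 [Hz|[v Hv]]].
  - left; apply c_refl.
  - right; exists w; apply c_vv.
  - right; exists (rg E e); apply c_er.
  - right; exists (sc E e); apply c_is.
  - left; apply is_zero_mulr, Hz.
  - right; exists v.
    apply cong_reassoc, c_mul; [apply c_refl | exact Hv].
Qed.

(* S(E) acts by partial maps on the finite paths of E (a path is stored as
   its list of edges plus a vertex, which is the path when the list is empty):
   e prepends e, e^-1 removes a leading e, and v keeps the paths starting at v.
   A term acting nontrivially on some path is therefore nonzero. *)
Definition path : Type := (list (edge E) * vert E)%type.

Definition path_start (x : path) : vert E :=
  match fst x with [] => snd x | e :: _ => sc E e end.

Definition path_cons (e : edge E) (x : path) : path := (e :: fst x, snd x).

Fixpoint act (t : term E) : path -> path -> Prop :=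
  match t with
  | TZ => fun _ _ => False
  | TG (LV w) => fun x y => y = x /\ path_start x = w
  | TG (LE e) => fun x y => y = path_cons e x /\ rg E e = path_start x
  | TG (LI e) => fun x y => x = path_cons e y /\ rg E e = path_start y
  | TM t u => fun x y => exists z, act u x z /\ act t z y
  end.

Lemma path_cons_inj e f x y : path_cons e x = path_cons f y -> e = f /\ x = y.
Proof.
  destruct x, y; unfold path_cons; simpl; intros H; injection H; intros; subst; auto.
Qed.

Lemma act_cong t u : cong E t u -> forall x y, act t x y <-> act u x y.
Proof.
  induction 1; intros x y; simpl.
  - reflexivity.
  - symmetry; apply IHcong.
  - rewrite IHcong1; apply IHcong2.
  - split; intros (z & Hu & Ht); exists z;
      [rewrite <- IHcong2, <- IHcong1 | rewrite IHcong2, IHcong1]; auto.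
  - firstorder.
  - firstorder.
  - firstorder.
  - split; [intros (z & [-> Hx] & [-> _]) | intros [-> Hx]; exists x]; auto.
  - split; [intros (z & [-> Hx] & [-> Hz]); congruence | intros []].
  - split; [intros (z & [-> Hx] & [-> _]) | intros [-> Hx]; exists (path_cons e x)]; auto.
  - split; [intros (z & [-> Hx] & [-> _]) | intros [-> Hx]; exists x]; auto.
  - split; [intros (z & [-> Hz] & [-> _]) | intros [-> Hy]; exists y]; auto.
  - split; [intros (z & [-> Hx] & [-> Hy]) | intros [-> Hy]; exists (path_cons e y)]; auto.
  - split; [intros (z & [-> Hx] & [Hz Hy]) | intros [-> Hx]; exists (path_cons e x)]; auto.
    apply path_cons_inj in Hz as [_ ->]; auto.
  - split; [intros (z & [-> Hx] & [Hz Hy]) | intros []].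
    apply path_cons_inj in Hz as [? _]; congruence.
Qed.

Lemma act_nonzero t x y : act t x y -> ~ is_zero E t.
Proof. intros Hact Hz. exact (proj1 (act_cong t TZ Hz x y) Hact). Qed.

Lemma vertex_nonzero v : ~ is_zero E (TG (LV v)).
Proof. apply (act_nonzero _ ([], v) ([], v)); simpl; auto. Qed.

Lemma edge_nonzero e : ~ is_zero E (TG (LE e)).
Proof. apply (act_nonzero _ ([], rg E e) ([e], rg E e)); simpl; auto. Qed.

Lemma act_from_source v : is_source E v -> forall t z, act t ([], v) z ->
  z = ([], v) /\ cong E (TM t (TG (LV v))) (TG (LV v)).
Proof.
  intros Hv t. induction t as [| [w|e|e] | t1 IH1 t2 IH2]; intros z Hact; simpl in Hact.
  - destruct Hact.
  - destruct Hact as [-> <-]. split; [reflexivity | apply c_vv].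
  - destruct Hact as [_ He]. destruct (Hv e He).
  - destruct Hact as [Hx _]. discriminate Hx.
  - destruct Hact as (z' & Hact2 & Hact1).
    destruct (IH2 _ Hact2) as [-> H2]. destruct (IH1 _ Hact1) as [-> H1].
    split; [reflexivity|].
    apply cong_reassoc.
    exact (c_trans E _ _ _ (c_mul E _ _ _ _ (c_refl E t1) H2) H1).
Qed.

Fixpoint parity (t : term E) : bool :=
  match t with
  | TZ | TG (LV _) => false
  | TG (LE _) | TG (LI _) => true
  | TM t u => xorb (parity t) (parity u)
  end.

Lemma parity_cong t u : cong E t u -> is_zero E t \/ parity t = parity u.
Proof.
  induction 1; simpl.
  - auto.
  - destruct IHcong as [Hz|Heq]; auto. left; exact (is_zero_cong _ _ (c_sym E _ _ H) Hz).
  - destruct IHcong1 as [Hz|Heq1]; auto.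
    destruct IHcong2 as [Hz|Heq2]; [left; exact (is_zero_cong _ _ H Hz) | right; congruence].
  - destruct IHcong1 as [Hz|Heq1]; [left; apply is_zero_mull, Hz|].
    destruct IHcong2 as [Hz|Heq2]; [left; apply is_zero_mulr, Hz | right; congruence].
  - right; symmetry; apply xorb_assoc.
  - left; apply c_zl.
  - left; apply c_zr.
  - auto.
  - left; apply c_vw; assumption.
  - auto.
  - auto.
  - auto.
  - auto.
  - auto.
  - left; apply c_if; assumption.
Qed.

End GraphInverseSemigroup.

Lemma gmul_eq_r_id (G : Group) (x y : G) : gmul G x y = y -> x = gone G.
Proof.
  intros Hxy. rewrite <- (gmul1r G x), <- (gmulVr G y), gmulA, Hxy. reflexivity.
Qed.

Definition bool_group : Group.
Proof.
  refine {| gcar := bool; gmul := xorb; gone := false; ginv := fun b => b |};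
    intros; repeat match goal with b : bool |- _ => destruct b end; reflexivity.
Defined.

Lemma no_vertex_trivial_grading (E : Graph) (G : Group) (deg : term E -> G) :
  ~ inhabited (vert E) -> trivial_grading E G deg.
Proof. intros Hno a _ t _. exact (zero_of_no_vertex E Hno t). Qed.

Section Gradings.
Variables (E : Graph) (G : Group) (deg : term E -> G).
Hypothesis deg_grading : is_grading E G deg.

Lemma deg_mul_cong t u w :
  ~ is_zero E w -> cong E (TM t u) w -> gmul G (deg t) (deg u) = deg w.
Proof.
  intros Hw Htu. destruct deg_grading as [Hwd Hmul].
  assert (Hnz : ~ is_zero E (TM t u)).
  { intros Hz. exact (Hw (is_zero_cong E _ _ (c_sym E _ _ Htu) Hz)). }
  rewrite <- (Hmul _ _ Hnz). exact (Hwd _ _ Hnz Htu).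
Qed.

Lemma deg_vertex v : deg (TG (LV v)) = gone G.
Proof.
  apply (gmul_eq_r_id G _ (deg (TG (LV v)))).
  apply deg_mul_cong; [apply vertex_nonzero | apply c_vv].
Qed.

Lemma in_comp_mul a b s t :
  in_comp E G deg a s -> in_comp E G deg b t -> in_comp E G deg (gmul G a b) (TM s t).
Proof.
  intros [Hs|Hs]; [left; apply is_zero_mull, Hs|].
  intros [Ht|Ht]; [left; apply is_zero_mulr, Ht|].
  destruct (classic (is_zero E (TM s t))) as [Hz|Hnz]; [left; exact Hz|].
  right. rewrite (proj2 deg_grading _ _ Hnz), Hs, Ht. reflexivity.
Qed.

Lemma strong_grading_source_group_trivial v :
  strong_grading E G deg -> is_source E v -> forall a : G, a = gone G.
Proof.
  intros Hstrong Hv a.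
  destruct (proj2 (Hstrong (ginv G a) a) (TG (LV v))) as (s & t & _ & [Ht|Ht] & Hst).
  { right. rewrite gmulVl. apply deg_vertex. }
  - destruct (vertex_nonzero E v).
    apply (is_zero_cong E _ _ (c_sym E _ _ Hst)), is_zero_mulr, Ht.
  - assert (Hact : act E (TM s t) ([], v) ([], v)).
    { apply (act_cong E _ _ Hst); simpl; auto. }
    destruct Hact as (z & Hact & _).
    destruct (act_from_source E v Hv t z Hact) as [_ Htv].
    rewrite <- Ht. apply (gmul_eq_r_id G _ (deg (TG (LV v)))).
    apply deg_mul_cong; [apply vertex_nonzero | exact Htv].
Qed.

End Gradings.

Section ParityGrading.
Variable E : Graph.

Lemma parity_is_grading : is_grading E bool_group (parity E).
Proof.
  split.
  - intros t u Hnz Htu.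
    destruct (parity_cong E t u Htu) as [Hz|Heq]; [contradiction | exact Heq].
  - reflexivity.
Qed.

Lemma parity_nontrivial : edge E -> ~ trivial_grading E bool_group (parity E).
Proof.
  intros e Htriv. apply (edge_nonzero E e), (Htriv true); [discriminate | right; reflexivity].
Qed.

Lemma parity_strong : (forall v, ~ is_source E v) -> strong_grading E bool_group (parity E).
Proof.
  intros Hns a b. split; [apply in_comp_mul, parity_is_grading|].
  intros u Hu.
  assert (Hzero : is_zero E u -> exists s t, in_comp E bool_group (parity E) a s /\
            in_comp E bool_group (parity E) b t /\ cong E (TM s t) u).
  { intros Hz. exists TZ, TZ. split; [left; apply c_refl | split; [left; apply c_refl|]].
    exact (c_trans E _ _ _ (c_zl E TZ) (c_sym E _ _ Hz)). }
  destruct Hu as [Hz|Hu]; [exact (Hzero Hz)|].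
  destruct (right_vertex_unit E u) as [Hz|[w Huw]]; [exact (Hzero Hz)|].
  simpl in Hu. destruct b.
  - destruct (not_all_not_ex _ _ (Hns w)) as [e He].
    exists (TM u (TG (LI e))), (TG (LE e)). split; [|split].
    + right. simpl. rewrite Hu. destruct a; reflexivity.
    + right. reflexivity.
    + apply (cong_reassoc E).
      rewrite <- He in Huw.
      exact (c_trans E _ _ _ (c_mul E _ _ _ _ (c_refl E u) (c_ie E e)) Huw).
  - exists u, (TG (LV w)). split; [|split].
    + right. rewrite Hu. destruct a; reflexivity.
    + right. reflexivity.
    + exact Huw.
Qed.

End ParityGrading.

Theorem theorem8p8 (E : Graph) :
  (exists (G : Group) (deg : term E -> G),
      is_grading E G deg /\ ~ trivial_grading E G deg /\ strong_grading E G deg)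
  <->
  (inhabited (vert E) /\ forall v : vert E, ~ is_source E v).
Proof.
  split.
  - intros (G & deg & Hgrading & Hnontriv & Hstrong). split.
    + apply NNPP. intros Hno. exact (Hnontriv (no_vertex_trivial_grading E G deg Hno)).
    + intros v Hv. apply Hnontriv. intros a Ha. destruct Ha.
      exact (strong_grading_source_group_trivial E G deg Hgrading v Hstrong Hv a).
  - intros [[v] Hns]. destruct (not_all_not_ex _ _ (Hns v)) as [e _].
    exists bool_group, (parity E).
    split; [apply parity_is_grading | split].
    + exact (parity_nontrivial E e).
    + exact (parity_strong E Hns).
Qed.
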